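(* Suppose $D$ is the class of transvections in the unitary group $\mathrm{SU}_{n+1}(2)$, $n\ge2$. Then $\mathcal{A}(D)/\mathcal{V}(D)$ is isomorphic to the Lie algebra of type ${}^2A_n(2)$ modulo its center.
   Context: For a class $D$ of $3$-transpositions generating a group (involutions with $o(de)\in\{1,2,3\}$): lines are triples $\{d,e,d^e\}$ with $d,e$ non-commuting; $\mathcal{A}(D)$ is the $\mathbb{F}_2$-space with basis $D$ and bilinear product $d*e=d+e+f$ if $\{d,e,f\}$ is a line, $0$ otherwise; the form $\langle d,e\rangle$ is $1$ if $d,e$ do not commute and $0$ otherwise; $\mathcal{V}(D)$ is its radical. The Lie algebra of type ${}^2A_n(2)$ is the $\mathbb{F}_2$-Lie algebra $\mathfrak g_2$ generated, inside the split simple Lie algebra $\mathfrak g$ of type $A_n$ over $\mathbb{F}_4$ with Chevalley basis $\{\mathfrak x_\alpha\}\cup\{[\mathfrak x_\alpha,\mathfrak x_{-\alpha}]\}$, by the elements $\omega\mathfrak x_\alpha+\bar\omega\mathfrak x_{-\alpha}+\omega\bar\omega[\mathfrak x_\alpha,\mathfrak x_{-\alpha}]$ ($\alpha$ a root, $\omega\in\mathbb{F}_4^*$, $\bar\omega=\omega^2$); equivalently the unitary Lie algebra $\mathfrak{su}_{n+1}(2)$. *)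

From mathcomp Require Import all_boot all_algebra.
Set Implicit Arguments. Unset Strict Implicit. Unset Printing Implicit Defensive.
Import GRing.Theory.
Local Open Scope ring_scope.

Section Defs.
Variables (F : finFieldType) (n : nat).

(* field involution of F_4 : x |-> x^2 *)
Definition conjF (x : F) : F := x ^+ 2.

(* SU_{n+1}(2) w.r.t. the standard hermitian form h(x,y) = sum_i x_i conj(y_i):
   M^T * conj(M) = 1 and det M = 1 *)
Definition is_SU (M : 'M[F]_(n.+1)) : bool :=
  (\det M == 1) && (M^T *m map_mx conjF M == 1%:M).

Definition is_transvection (M : 'M[F]_(n.+1)) : bool :=
  (\rank (M - 1%:M) == 1%N) && ((M - 1%:M) *m (M - 1%:M) == 0).

Definition D_pred (M : 'M[F]_(n.+1)) : bool := is_SU M && is_transvection M.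

Definition Dtype := {M : 'M[F]_(n.+1) | D_pred M}.

Local Notation Aalg := {ffun Dtype -> 'F_2}.

Definition basisM (m : 'M[F]_(n.+1)) : Aalg := [ffun x : Dtype => ((val x == m) : nat)%:R].

Definition commuteD (d e : Dtype) : bool := val d *m val e == val e *m val d.

(* d * e = d + e + d^e on lines, 0 otherwise *)
Definition prodBasis (d e : Dtype) : Aalg :=
  if ~~ commuteD d e then
    basisM (val d) + basisM (val e) + basisM (val e *m val d *m val e)
  else 0.

(* bilinear extension (scalars in F_2 = {0,1}) *)
Definition prodA (a b : Aalg) : Aalg :=
  \sum_(d : Dtype) \sum_(e : Dtype) (if a d * b e == 0 then 0 else prodBasis d e).

Definition formA (a b : Aalg) : 'F_2 :=
  \sum_(d : Dtype) \sum_(e : Dtype) a d * b e * ((~~ commuteD d e) : nat)%:R.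

Definition radV (a : Aalg) : Prop := forall b, formA a b = 0.

(* generators of the Lie algebra of type 2A_n(2) inside sl_{n+1}(F_4):
   w x_a + conj(w) x_{-a} + w conj(w) [x_a, x_{-a}], x_a = E_ij, x_{-a} = E_ji *)
Definition g2gen (i j : 'I_n.+1) (w : F) : 'M[F]_(n.+1) :=
  w *: delta_mx i j + conjF w *: delta_mx j i
  + (w * conjF w) *: (delta_mx i i - delta_mx j j).

Definition lie (x y : 'M[F]_(n.+1)) : 'M[F]_(n.+1) := x *m y - y *m x.

Inductive in_g2 : 'M[F]_(n.+1) -> Prop :=
| g2_gen i j w : i != j -> w != 0 -> in_g2 (g2gen i j w)
| g2_zero : in_g2 0
| g2_add x y : in_g2 x -> in_g2 y -> in_g2 (x + y)
| g2_lie x y : in_g2 x -> in_g2 y -> in_g2 (lie x y).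

Definition in_center (z : 'M[F]_(n.+1)) : Prop :=
  in_g2 z /\ forall y, in_g2 y -> lie z y = 0.

End Defs.

Notation Aalg F n := {ffun Dtype F n -> 'F_2}.

From mathcomp Require Import all_boot all_algebra all_field.
From mathcomp Require Import ring.
Set Implicit Arguments. Unset Strict Implicit. Unset Printing Implicit Defensive.
Import GRing.Theory.
Local Open Scope ring_scope.

(* Every transvection of SU_{n+1}(2) is 1 + v v^* for a nonzero isotropic vector v,
   and conversely.  Send the basis element d of A(D) to the nilpotent matrix d - 1.
   If d = 1 + N and e = 1 + M do not commute, h(u, w) has norm 1 for the defining
   vectors, so M N M = M, and d^e - 1 = N + M + [N, M] in characteristic 2: the
   line product becomes the Lie bracket.  The form <d, e> is tr((d - 1)(e - 1)), so
   the radical corresponds to the matrices that are trace-orthogonal to every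
   v v^* with v isotropic; testing against v = e_i + u e_j forces such a matrix
   to be scalar, i.e. central.  Finally each generator of g_2 is v v^* for
   v = e_i + conj(w) e_j, while each v v^* is a sum of generators, so the map is
   onto g_2. *)

Section F4.
Variable F : finFieldType.
Hypothesis F4 : #|F| = 4%N.

Lemma pchar2_F4 : 2%N \in [pchar F].
Proof. exact: (@card_finPcharP _ 2 2). Qed.

Lemma expr4_F4 (x : F) : x ^+ 4 = x.
Proof. by rewrite -{2}(expf_card x) F4. Qed.

Lemma conjFE : @conjF F =1 pFrobenius_aut pchar2_F4.
Proof. by []. Qed.

Lemma conjF0 : conjF (0 : F) = 0. Proof. by rewrite conjFE rmorph0. Qed.
Lemma conjF1 : conjF (1 : F) = 1. Proof. by rewrite conjFE rmorph1. Qed.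
Lemma conjFD (x y : F) : conjF (x + y) = conjF x + conjF y.
Proof. by rewrite !conjFE rmorphD. Qed.
Lemma conjFM (x y : F) : conjF (x * y) = conjF x * conjF y.
Proof. by rewrite !conjFE rmorphM. Qed.

Lemma conjFK : involutive (@conjF F).
Proof. by move=> x; rewrite /conjF -exprM expr4_F4. Qed.

Lemma mulf_conjF (x : F) : x * conjF x = (x != 0)%:R.
Proof.
have [->|x0] := eqVneq x 0; first by rewrite mul0r.
by apply: (mulfI x0); rewrite mulr1 /conjF -!exprS expr4_F4.
Qed.

Lemma cube_root_unity_F4 : exists w : F, [/\ w != 0, w != 1 & 1 + w + w ^+ 2 = 0].
Proof.
have /subsetPn[w _] : ~~ ([set: F] \subset [:: (0 : F); 1]).
  apply: contraTN isT => /subset_leq_card/leq_trans/(_ (card_size _)).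
  by rewrite cardsT F4.
rewrite !inE negb_or => /andP[w0 w1]; exists w; split => //.
have w3 : w ^+ 3 = 1 by have := mulf_conjF w; rewrite w0 /conjF -exprS.
have : (w - 1) * (1 + w + w ^+ 2) = 0.
  have -> : (w - 1) * (1 + w + w ^+ 2) = w ^+ 3 - 1 by ring.
  by rewrite w3 subrr.
by move/eqP; rewrite mulf_eq0 subr_eq0 (negPf w1) => /eqP.
Qed.

Lemma F4_forms_eq0 (a b c d : F) :
  (forall u : F, u != 0 -> a + u * b + conjF u * c + d = 0) -> b = 0 /\ a = d.
Proof.
move=> H; have [w [w0 w1 wE]] := cube_root_unity_F4.
have e1 := H 1 (oner_neq0 _); have e2 := H w w0; have e3 := H (w ^+ 2) (expf_neq0 _ w0).
rewrite conjF1 !mul1r in e1; rewrite /conjF -exprM expr4_F4 in e3; rewrite /conjF in e2.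
(* Summing the equations for u = 1, w, w^2 leaves a + d; then u = w against u = 1
   isolates b. *)
have ad : a + d = 0.
  have -> : a + d = (a + b + c + d) + (a + w * b + w ^+ 2 * c + d)
      + (a + w ^+ 2 * b + w * c + d) - (b + c) * (1 + w + w ^+ 2) - 2%:R * (a + d) by ring.
  by rewrite e1 e2 e3 wE (pcharf0 pchar2_F4) mulr0 mul0r !add0r !subr0 oppr0.
have bw : b * (w * (1 - w)) = 0.
  have -> : b * (w * (1 - w)) = (a + w * b + w ^+ 2 * c + d) - (a + d)
      - w ^+ 2 * ((a + b + c + d) - (a + d)) by ring.
  by rewrite e1 e2 ad !subr0 mulr0 subr0.
split; last by move/eqP: ad; rewrite addr_eq0 (oppr_pchar2 pchar2_F4) => /eqP.
by move/eqP: bw; rewrite !mulf_eq0 (negPf w0) subr_eq0 [1 == w]eq_sym (negPf w1) !orbF => /eqP.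
Qed.

Definition f2F (x : 'F_2) : F := (x : nat)%:R.

Lemma F2_cases (x : 'F_2) : x = 0 \/ x = 1.
Proof. by case: x => [[|[|m]] //= H]; [left|right]; apply/val_inj. Qed.

Lemma f2F0 : f2F 0 = 0. Proof. by []. Qed.
Lemma f2F1 : f2F 1 = 1. Proof. by []. Qed.

Lemma f2FD x y : f2F (x + y) = f2F x + f2F y.
Proof.
case: (F2_cases x) => ->; case: (F2_cases y) => ->; rewrite ?add0r ?addr0 //.
by rewrite f2F1 (addrr_pchar2 pchar2_F4).
Qed.

Lemma f2FM x y : f2F (x * y) = f2F x * f2F y.
Proof. by case: (F2_cases x) => ->; rewrite ?mul0r ?mul1r ?f2F0 ?f2F1 ?mul0r ?mul1r. Qed.

Lemma f2F_eq0 x : (f2F x == 0) = (x == 0).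
Proof. by case: (F2_cases x) => ->; rewrite ?f2F0 ?f2F1 ?eqxx ?oner_eq0. Qed.

Lemma f2F_sum I r (P : pred I) (f : I -> 'F_2) :
  f2F (\sum_(i <- r | P i) f i) = \sum_(i <- r | P i) f2F (f i).
Proof. exact: (big_morph f2F f2FD f2F0). Qed.

Definition ctmx p q (A : 'M[F]_(p, q)) : 'M[F]_(q, p) := (map_mx (@conjF F) A)^T.

Lemma ctmxE p q (A : 'M[F]_(p, q)) i j : ctmx A i j = conjF (A j i).
Proof. by rewrite !mxE. Qed.

Lemma ctmxK p q : cancel (@ctmx p q) (@ctmx q p).
Proof. by move=> A; apply/matrixP => i j; rewrite !mxE conjFK. Qed.

Lemma ctmxM p q r (A : 'M[F]_(p, q)) (B : 'M[F]_(q, r)) :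
  ctmx (A *m B) = ctmx B *m ctmx A.
Proof. by rewrite /ctmx -trmx_mul !(eq_map_mx _ conjFE) map_mxM. Qed.

Lemma ctmxD p q (A B : 'M[F]_(p, q)) : ctmx (A + B) = ctmx A + ctmx B.
Proof. by apply/matrixP => i j; rewrite !mxE conjFD. Qed.

Lemma ctmxZ p q a (A : 'M[F]_(p, q)) : ctmx (a *: A) = conjF a *: ctmx A.
Proof. by apply/matrixP => i j; rewrite !mxE conjFM. Qed.

Lemma ctmx1 p : ctmx (1%:M : 'M[F]_p) = 1%:M.
Proof. by apply/matrixP => i j; rewrite !mxE eq_sym; case: (i == j); rewrite ?conjF1 ?conjF0. Qed.

Lemma addmx_pchar2 p q (A : 'M[F]_(p, q)) : A + A = 0.
Proof. by apply/matrixP => i j; rewrite !mxE (addrr_pchar2 pchar2_F4). Qed.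

Lemma oppmx_pchar2 p q (A : 'M[F]_(p, q)) : - A = A.
Proof. by apply/matrixP => i j; rewrite mxE (oppr_pchar2 pchar2_F4). Qed.

Lemma mulmx11 p (A : 'M[F]_(p, 1)) (S : 'M[F]_1) : A *m S = S 0 0 *: A.
Proof. by rewrite {1}[S]mx11_scalar mul_mx_scalar. Qed.

Section Unitary.
Variable n : nat.
Local Notation vec := 'cV[F]_n.+1.

Definition herm (u v : vec) : F := (ctmx u *m v) 0 0.
Definition outer (v : vec) : 'M[F]_n.+1 := v *m ctmx v.

Lemma hermC u v : herm v u = conjF (herm u v).
Proof. by rewrite /herm -ctmxE ctmxM ctmxK. Qed.

Lemma outerE v i j : outer v i j = v i 0 * conjF (v j 0).
Proof. by rewrite mxE big_ord1 ctmxE. Qed.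

Lemma ctmx_outer v : ctmx (outer v) = outer v.
Proof. by rewrite /outer ctmxM ctmxK. Qed.

Lemma outer_mul u w : outer u *m outer w = herm u w *: (u *m ctmx w).
Proof. by rewrite /outer mulmxA -(mulmxA u) mulmx11 scalemxAl. Qed.

Lemma outer_sqr v : herm v v = 0 -> outer v *m outer v = 0.
Proof. by move=> hv; rewrite outer_mul hv scale0r. Qed.

Lemma outer_eq0 v : (outer v == 0) = (v == 0).
Proof.
apply/idP/eqP => [/eqP v0|->]; last by rewrite /outer mul0mx.
apply/matrixP => i j; rewrite (ord1 j) mxE.
have := congr1 (fun A : 'M_n.+1 => A i i) v0; rewrite outerE mxE mulf_conjF //.
by case: eqP => // _ /eqP; rewrite oner_eq0.
Qed.

Lemma mxtrace_mul_outer (X : 'M[F]_n.+1) w :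
  \tr (X *m outer w) = (ctmx w *m X *m w) 0 0.
Proof. by rewrite /outer mulmxA mxtrace_mulC trace_mx11 mulmxA. Qed.

Lemma quadform_delta (X : 'M[F]_n.+1) i j u :
  let w : vec := delta_mx i 0 + u *: delta_mx j 0 in
  (ctmx w *m X *m w) 0 0 = X i i + u * X i j + conjF u * X j i + conjF u * u * X j j.
Proof.
have ctd k : ctmx (delta_mx k 0 : vec) = delta_mx 0 k.
  by apply/matrixP => a b; rewrite !mxE andbC; case: (_ && _); rewrite ?conjF1 ?conjF0.
have dXd a b : (delta_mx 0 a : 'rV_n.+1) *m X *m (delta_mx b 0 : vec) = (X a b)%:M.
  by apply/matrixP => x y; rewrite !ord1 -rowE -colE !mxE eqxx mulr1n.
rewrite /= ctmxD ctmxZ !ctd !mulmxDl !mulmxDr -!scalemxAl -!scalemxAr !dXd !mxE /=.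
by rewrite !mulr1n !mulrA addrA.
Qed.

Lemma outer_transvection v : v != 0 -> herm v v = 0 -> D_pred (1%:M + outer v).
Proof.
move=> v0 hv.
have inv2 : (1%:M + outer v) *m (1%:M + outer v) = 1%:M.
  rewrite mulmxDl !mulmxDr !mul1mx mulmx1 outer_sqr // addr0 -addrA.
  by rewrite addmx_pchar2 addr0.
have sa : ctmx (1%:M + outer v) = 1%:M + outer v by rewrite ctmxD ctmx1 ctmx_outer.
apply/andP; split; apply/andP; split.
- have : \det (1%:M + outer v) ^+ 2 == 1 by rewrite expr2 -det_mulmx inv2 det1.
  by rewrite sqrf_eq1 (oppr_pchar2 pchar2_F4) orbb.
- by rewrite -[map_mx _ _]trmxK -/(ctmx _) sa -trmx_mul inv2 trmx1.
- rewrite addrC addKr eqn_leq mulmx_max_rank lt0n mxrank_eq0 outer_eq0.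
  by rewrite v0.
- by rewrite addrC addKr outer_sqr.
Qed.

Lemma unitary_unipotent (N : 'M[F]_n.+1) :
  ctmx (1%:M + N) *m (1%:M + N) = 1%:M -> ctmx N + N + ctmx N *m N = 0.
Proof.
rewrite ctmxD ctmx1 mulmxDl !mulmxDr !mul1mx mulmx1 -!addrA => /(canRL (addKr _)).
by rewrite addNr addrCA.
Qed.

Lemma rank1_selfadjoint_outer (N : 'M[F]_n.+1) :
  \rank N = 1%N -> ctmx N + N + ctmx N *m N = 0 -> exists lam v, N = lam *: outer v.
Proof.
move=> r1 UN.
have [C [R defN]] : exists (C : 'cV_n.+1) (R : 'rV_n.+1), N = C *m R.
  by move: (col_base N) (row_base N) (mulmx_base N); rewrite r1 => C R <-; exists C, R.
have [b Rb] : exists b, R 0 b != 0.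
  apply/existsP; apply: contraTT (introT eqP r1) => /existsPn R0.
  suff -> : N = 0 by rewrite mxrank0.
  by apply/matrixP => i j; rewrite defN mxE big_ord1 (eqP (negbNE (R0 j))) !mxE mulr0.
(* Column b of N^* + N + N^* N = 0 makes C a multiple of R^*. *)
pose c := herm C C.
have E a : conjF (R 0 a) * conjF (C b 0) + C a 0 * R 0 b + c * (conjF (R 0 a) * R 0 b) = 0.
  have UN' : ctmx R *m ctmx C + C *m R + c *: (ctmx R *m R) = 0.
    by rewrite -UN defN ctmxM mulmxA -(mulmxA (ctmx R)) mulmx11 scalemxAl.
  by have := congr1 (fun X : 'M[F]_n.+1 => X a b) UN'; rewrite !mxE !big_ord1 !mxE.
exists ((conjF (C b 0) + c * R 0 b) / R 0 b), (ctmx R).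
rewrite defN /outer ctmxK scalemxAl; congr (_ *m _).
apply/matrixP => a j; rewrite (ord1 j) !mxE; apply: (mulIf Rb).
move/eqP: (E a); rewrite addrAC addrC addr_eq0 (oppr_pchar2 pchar2_F4) => /eqP ->.
by field.
Qed.

Lemma transvectionP M : D_pred M -> exists v, [/\ v != 0, herm v v = 0 & M = 1%:M + outer v].
Proof.
case/andP => /andP[_ /eqP U] /andP[/eqP r1 /eqP N2].
set N := M - 1%:M in r1 N2.
have defM : M = 1%:M + N by rewrite /N addrC subrK.
have N0 : N != 0 by rewrite -mxrank_eq0 r1.
have UN : ctmx N + N + ctmx N *m N = 0.
  by apply: unitary_unipotent; rewrite -defM; apply: trmx_inj; rewrite trmx_mul trmx1 trmxK.
have [lam [v defN]] := rank1_selfadjoint_outer r1 UN.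
have lam0 : lam != 0 by apply: contraNneq N0 => l0; rewrite defN l0 scale0r.
have ov0 : outer v != 0 by apply: contraNneq N0 => o0; rewrite defN o0 scaler0.
have hv : herm v v = 0.
  move/eqP: N2; rewrite defN -scalemxAl -scalemxAr scalerA outer_mul scalerA.
  by rewrite scalemx_eq0 (negPf ov0) orbF !mulf_eq0 (negPf lam0) => /eqP.
have lam1 : lam = 1.
  move/eqP: UN; rewrite defN ctmxZ ctmx_outer -scalemxAl -scalemxAr outer_sqr //.
  rewrite !scaler0 addr0 -scalerDl scalemx_eq0 (negPf ov0) orbF addr_eq0.
  rewrite (oppr_pchar2 pchar2_F4) => /eqP clam.
  by apply: (mulfI lam0); rewrite mulr1 -expr2.
exists v; split => //; first by rewrite -outer_eq0.
by rewrite defM defN lam1 scale1r.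
Qed.

Lemma trace_outer0_scalar (X : 'M[F]_n.+1) :
  (forall w, w != 0 -> herm w w = 0 -> \tr (X *m outer w) = 0) -> X = (X 0 0)%:M.
Proof.
move=> X0.
(* Test against e_i + u e_j, which is isotropic for all u != 0 since u conj(u) = 1. *)
have offdiag i j : i != j -> X i j = 0 /\ X i i = X j j.
  move=> ij; apply: (F4_forms_eq0 (c := X j i)) => u u0.
  have cu : conjF u * u = 1 by rewrite mulrC mulf_conjF u0.
  rewrite -[X j j]mul1r -cu -(quadform_delta X i j u) -mxtrace_mul_outer X0 //.
    apply/eqP => /matrixP/(_ i 0); rewrite !mxE eqxx (negPf ij) mulr0 addr0.
    by apply/eqP/oner_neq0.
  rewrite /herm -[ctmx _]mulmx1 quadform_delta !mxE eqxx (negPf ij) eq_sym (negPf ij) /=.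
  by rewrite eqxx !mulr0 !addr0 mulr1 cu (addrr_pchar2 pchar2_F4).
apply/matrixP => a b; rewrite mxE.
have [<-|ab] := eqVneq a b; last by rewrite mulr0n; case: (offdiag a b ab).
rewrite mulr1n; have [->//|a0] := eqVneq a 0.
by case: (offdiag a 0 a0).
Qed.

Local Notation I := 'I_n.+1.

Lemma g2genE (k l : I) (w : F) i j : g2gen k l w i j =
  w * ((i == k) && (j == l))%:R + conjF w * ((i == l) && (j == k))%:R +
  w * conjF w * (((i == k) && (j == k))%:R - ((i == l) && (j == l))%:R).
Proof. by rewrite !mxE. Qed.

Lemma g2gen0 (k l : I) : g2gen k l (0 : F) = 0.
Proof. by rewrite /g2gen conjF0 mul0r !scale0r !addr0. Qed.

Lemma sum_ltn_indicator (f : I -> I -> F) (i j : I) :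
  \sum_(k : I) \sum_(l : I | (k < l)%N) f k l * ((i == k) && (j == l))%:R = ((i < j)%N)%:R * f i j.
Proof.
rewrite [LHS](bigD1 i) //= [X in _ + X]big1 ?addr0 => [|k ki]; last first.
  by apply: big1 => l _; rewrite eq_sym (negPf ki) mulr0.
have [ij|ji] := ltnP i j.
  rewrite [LHS](bigD1 j) //= [X in _ + X]big1 ?addr0 => [|l /andP[_ lj]]; last first.
    by rewrite eq_sym (negPf lj) andbF mulr0.
  by rewrite !eqxx mulr1 mul1r.
rewrite mul0r; apply: big1 => l il; rewrite eqxx /=.
case: eqP => [jl|]; last by rewrite mulr0.
by move: il ji; rewrite -jl => /leq_trans/[apply]; rewrite ltnn.
Qed.

Lemma sum_ltn_indicator_l (f : I -> I -> F) (i j : I) :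
  \sum_(k : I) \sum_(l : I | (k < l)%N) f k l * ((i == k) && (j == k))%:R =
  (i == j)%:R * \sum_(l : I | (i < l)%N) f i l.
Proof.
rewrite [LHS](bigD1 i) //= [X in _ + X]big1 ?addr0 => [|k ki]; last first.
  by apply: big1 => l _; rewrite eq_sym (negPf ki) mulr0.
by rewrite eqxx mulr_sumr; apply: eq_bigr => l _; rewrite mulrC eq_sym.
Qed.

Lemma sum_ltn_indicator_r (f : I -> I -> F) (i j : I) :
  \sum_(k : I) \sum_(l : I | (k < l)%N) f k l * ((i == l) && (j == l))%:R =
  (i == j)%:R * \sum_(k : I | (k < i)%N) f k i.
Proof.
rewrite mulr_sumr [RHS]big_mkcond /=; apply: eq_bigr => k _.
have [ki|ik] := ltnP k i.
  rewrite [LHS](bigD1 i) //= [X in _ + X]big1 ?addr0 => [|l /andP[_ li]]; last first.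
    by rewrite eq_sym (negPf li) mulr0.
  by rewrite eqxx mulrC eq_sym.
rewrite big1 // => l kl; case: eqP => [il|]; last by rewrite mulr0.
by move: kl ik; rewrite -il => /leq_trans/[apply]; rewrite ltnn.
Qed.

Lemma sum_g2genE (w : I -> I -> F) (i j : I) :
  (\sum_(k : I) \sum_(l : I | (k < l)%N) g2gen k l (w k l)) i j =
  ((i < j)%N)%:R * w i j + ((j < i)%N)%:R * conjF (w j i) + (i == j)%:R *
    (\sum_(l : I | (i < l)%N) w i l * conjF (w i l)
     - \sum_(k : I | (k < i)%N) w k i * conjF (w k i)).
Proof.
rewrite summxE; under eq_bigr => k _ do rewrite summxE.
under eq_bigr => k _ do under eq_bigr => l _ do rewrite g2genE mulrBr.
under eq_bigr => k _ do rewrite !big_split /= sumrN.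
rewrite !big_split /= sumrN sum_ltn_indicator sum_ltn_indicator_l sum_ltn_indicator_r.
under eq_bigr => k _ do under eq_bigr => l _ do rewrite [(i == l) && _]andbC.
by rewrite sum_ltn_indicator mulrBr addrA.
Qed.

Lemma outer_sum_g2gen v : herm v v = 0 ->
  outer v = \sum_(k : I) \sum_(l : I | (k < l)%N) g2gen k l (v k 0 * conjF (v l 0)).
Proof.
move=> hv; apply/matrixP => i j; rewrite sum_g2genE outerE.
pose nv k := v k 0 * conjF (v k 0).
have nv_idem k : nv k * nv k = nv k.
  by rewrite /nv mulf_conjF; case: (_ != 0); rewrite ?mulr1 ?mulr0.
have cc a b : conjF (v a 0 * conjF (v b 0)) = v b 0 * conjF (v a 0) by rewrite conjFM conjFK mulrC.
have [ij|ji|/val_inj <-] := ltngtP i j.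
- by rewrite -val_eqE ltn_eqF // !mul0r !addr0 mul1r.
- by rewrite -val_eqE gtn_eqF // cc !mul0r add0r addr0 mul1r.
have nvnv a b : v a 0 * conjF (v b 0) * conjF (v a 0 * conjF (v b 0)) = nv a * nv b.
  by rewrite cc /nv; ring.
under eq_bigr => l _ do rewrite nvnv.
under [X in _ - X]eq_bigr => k _ do rewrite nvnv.
(* The norms nv k lie in {0, 1} and sum to h(v, v) = 0, so the diagonal entry
   nv i * (sum of the other norms) equals nv i. *)
have rest : \sum_(l : I | (i < l)%N) nv l + \sum_(k : I | (k < i)%N) nv k = nv i.
  have : \sum_(k : I) nv k = 0.
    by rewrite -[RHS]hv /herm mxE; apply: eq_bigr => k _; rewrite ctmxE mulrC.
  rewrite (bigD1 i) //= (bigID (fun l : I => (i < l)%N)) /= => /(canRL (addKr _)).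
  rewrite addr0 (oppr_pchar2 pchar2_F4) => <-; congr (_ + _); apply: eq_bigl => l.
    by rewrite andb_idl // => il; rewrite -val_eqE gtn_eqF.
  by rewrite -leqNgt ltn_neqAle val_eqE.
rewrite eqxx !mul0r !add0r mul1r -mulr_sumr -mulr_suml (oppr_pchar2 pchar2_F4).
by rewrite [_ * nv i]mulrC -mulrDr rest nv_idem.
Qed.

Lemma in_g2_sum J r (P : pred J) (f : J -> 'M[F]_n.+1) :
  (forall i, P i -> in_g2 (f i)) -> in_g2 (\sum_(i <- r | P i) f i).
Proof. by move=> H; elim/big_rec: _ => [|i x Pi]; [exact: g2_zero | exact: g2_add (H _ Pi)]. Qed.

Lemma in_g2_outer v : herm v v = 0 -> in_g2 (outer v).
Proof.
move=> hv; rewrite outer_sum_g2gen //; apply: in_g2_sum => k _; apply: in_g2_sum => l kl.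
have [->|w0] := eqVneq (v k 0 * conjF (v l 0)) 0; first by rewrite g2gen0; exact: g2_zero.
by apply: g2_gen => //; rewrite neq_ltn kl.
Qed.

Lemma g2gen_outer (i j : I) (w : F) : i != j -> w != 0 ->
  exists v, [/\ v != 0, herm v v = 0 & outer v = g2gen i j w].
Proof.
move=> ij w0; have ji : j != i by rewrite eq_sym.
have nw : w * conjF w = 1 by rewrite mulf_conjF w0.
exists (delta_mx i 0 + conjF w *: delta_mx j 0); split.
- apply/eqP => /matrixP/(_ i 0); rewrite !mxE eqxx (negPf ij) mulr0 addr0.
  by apply/eqP/oner_neq0.
- rewrite /herm -[ctmx _]mulmx1 quadform_delta !mxE !eqxx (negPf ij) (negPf ji).
  by rewrite !mulr0 !addr0 mulr1 conjFK nw (addrr_pchar2 pchar2_F4).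
apply/matrixP => k l; rewrite outerE g2genE !mxE /= !andbT.
have [->|ki] := eqVneq k i; have [->|li] := eqVneq l i;
  rewrite ?eqxx ?(negPf ij) ?(negPf ji) ?(negPf ki) ?(negPf li) /=;
  try case: (k == j); try case: (l == j);
  rewrite /= ?(mulr0, mul0r, addr0, add0r, mulr1, mul1r, subr0, sub0r, conjF0, conjF1, conjFK,
               oppr_pchar2 pchar2_F4, nw) //.
by rewrite mulrC.
Qed.

Lemma lieDl (x y z : 'M[F]_n.+1) : lie (x + y) z = lie x z + lie y z.
Proof. by rewrite /lie mulmxDl mulmxDr opprD addrACA. Qed.

Lemma lieDr (x y z : 'M[F]_n.+1) : lie z (x + y) = lie z x + lie z y.
Proof. by rewrite /lie mulmxDl mulmxDr opprD addrACA. Qed.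

Lemma lieC (x y : 'M[F]_n.+1) : lie x y = lie y x.
Proof. by rewrite /lie -(oppmx_pchar2 (y *m x - _)) opprB. Qed.

Lemma in_center0 : in_center (0 : 'M[F]_n.+1).
Proof. by split; [exact: g2_zero | move=> y _; rewrite /lie mul0mx mulmx0 subrr]. Qed.

Lemma in_centerD (x y : 'M[F]_n.+1) : in_center x -> in_center y -> in_center (x + y).
Proof.
by move=> [gx cx] [gy cy]; split=> [|z gz]; [exact: g2_add | rewrite lieDl cx // cy // addr0].
Qed.

Local Notation D := (Dtype F n).

Definition nilp (d : D) : 'M[F]_n.+1 := val d - 1%:M.

Lemma nilp_outer (d : D) : exists v, [/\ v != 0, herm v v = 0 & nilp d = outer v].
Proof.
have [v [v0 hv dv]] := transvectionP (valP d).
by exists v; rewrite /nilp dv addrC addKr.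
Qed.

Lemma val_nilp (d : D) : val d = 1%:M + nilp d.
Proof. by rewrite /nilp addrC subrK. Qed.

Lemma outer_nilp w : w != 0 -> herm w w = 0 -> exists d : D, nilp d = outer w.
Proof.
by move=> w0 hw; exists (Sub _ (outer_transvection w0 hw)); rewrite /nilp /= addrC addKr.
Qed.

Lemma commute_unipotent (A B : 'M[F]_n.+1) :
  ((1%:M + A) *m (1%:M + B) == (1%:M + B) *m (1%:M + A)) = (A *m B == B *m A).
Proof.
rewrite !mulmxDl !mulmxDr !mul1mx !mulmx1 !addrA (addrAC _ B A).
by rewrite (inj_eq (addrI _)).
Qed.

Lemma commuteD_herm (d e : D) u w : nilp d = outer u -> nilp e = outer w ->
  u != 0 -> herm u u = 0 -> commuteD d e = (herm u w == 0).
Proof.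
move=> du ew u0 hu.
rewrite /commuteD (val_nilp d) (val_nilp e) commute_unipotent du ew !outer_mul (hermC u w).
have [->|h0] := eqVneq (herm u w) 0; first by rewrite conjF0 !scale0r eqxx.
(* The two products differ on u, because h(u, u) = 0 but h(u, w) h(w, u) = 1. *)
apply/negP => /eqP/(congr1 (fun X : 'M[F]_n.+1 => X *m u)).
rewrite -!scalemxAl -!mulmxA !mulmx11 -/(herm w u) -/(herm u u) hu scale0r scaler0.
rewrite (hermC u w) scalerA => /eqP; rewrite scalemx_eq0 (negPf u0) orbF.
by rewrite mulf_conjF h0 oner_eq0.
Qed.

Lemma transvection_sqr (d : D) : val d *m val d = 1%:M.
Proof.
have [v [_ hv dv]] := nilp_outer d.
rewrite val_nilp dv mulmxDl !mulmxDr !mul1mx mulmx1 outer_sqr // addr0 -addrA.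
by rewrite addmx_pchar2 addr0.
Qed.

Lemma ctmx_transvection (d : D) : ctmx (val d) = val d.
Proof. by have [v [_ _ dv]] := nilp_outer d; rewrite val_nilp dv ctmxD ctmx1 ctmx_outer. Qed.

Lemma transvection_conj (d e : D) : exists x : D, val x = val e *m val d *m val e.
Proof.
have [u [u0 hu du]] := nilp_outer d.
have eu0 : val e *m u != 0.
  by apply: contraNneq u0 => eu; rewrite -[u]mul1mx -(transvection_sqr e) -mulmxA eu mulmx0.
have heu : herm (val e *m u) (val e *m u) = 0.
  rewrite /herm ctmxM ctmx_transvection mulmxA -(mulmxA _ (val e) (val e)).
  by rewrite transvection_sqr mulmx1.
have [x xeu] := outer_nilp eu0 heu.
exists x; rewrite val_nilp xeu (val_nilp d) du mulmxDr mulmx1 mulmxDl transvection_sqr.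
congr (_ + _).
by rewrite /outer ctmxM ctmx_transvection !mulmxA.
Qed.

Lemma conj_unipotent_sub1 (A B : 'M[F]_n.+1) : B *m B = 0 -> B *m A *m B = B ->
  (1%:M + B) *m (1%:M + A) *m (1%:M + B) - 1%:M = A + B + (A *m B + B *m A).
Proof.
move=> BB BAB; rewrite !mulmxDl !mulmxDr !mul1mx !mulmx1 !mulmxDl !mul1mx -mulmxA BB.
rewrite (mulmxA B A B) BAB add0r (addrAC B (B *m A) B) addmx_pchar2 add0r.
by rewrite (addrAC _ (B *m A)) (addrAC _ (B + A *m B)) (addrC 1%:M A) addrK !addrA.
Qed.

Lemma nilp_lineE (d e : D) : ~~ commuteD d e -> forall x : D, val x = val e *m val d *m val e ->
  nilp x = nilp d + nilp e + lie (nilp d) (nilp e).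
Proof.
move=> nc x Ex.
have [u [u0 hu du]] := nilp_outer d; have [w [w0 hw ew]] := nilp_outer e.
have huw : herm u w != 0 by rewrite -(commuteD_herm du ew u0 hu).
have ee : nilp e *m nilp e = 0 by rewrite ew outer_sqr.
have ede : nilp e *m nilp d *m nilp e = nilp e.
  rewrite ew du outer_mul -scalemxAl {2}/outer !mulmxA -(mulmxA _ (ctmx u)) mulmx11.
  by rewrite -scalemxAl scalerA -/(herm u w) (hermC u w) mulrC mulf_conjF huw scale1r.
by rewrite {1}/nilp Ex (val_nilp d) (val_nilp e) conj_unipotent_sub1 // /lie oppmx_pchar2.
Qed.

Definition psi (a : {ffun D -> 'F_2}) : 'M[F]_n.+1 := \sum_(d : D) f2F (a d) *: nilp d.

Lemma psiD a b : psi (a + b) = psi a + psi b.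
Proof. by rewrite /psi -big_split; apply: eq_bigr => d _; rewrite ffunE f2FD scalerDl. Qed.

Lemma psi0 : psi 0 = 0.
Proof. by rewrite /psi big1 // => d _; rewrite ffunE f2F0 scale0r. Qed.

Lemma psi_sum J r (P : pred J) (f : J -> {ffun D -> 'F_2}) :
  psi (\sum_(i <- r | P i) f i) = \sum_(i <- r | P i) psi (f i).
Proof. exact: (big_morph psi psiD psi0). Qed.

Lemma psi_basisM (d : D) : psi (basisM (val d)) = nilp d.
Proof.
rewrite /psi (bigD1 d) //= big1 ?addr0 => [|e ed]; rewrite ffunE val_eqE.
  by rewrite eqxx f2F1 scale1r.
by rewrite (negPf ed) f2F0 scale0r.
Qed.

Lemma psi_prodBasis (d e : D) : psi (prodBasis d e) = lie (nilp d) (nilp e).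
Proof.
rewrite /prodBasis /lie; case: ifPn => [nc|/negPn].
  have [x Ex] := transvection_conj d e.
  by rewrite !psiD -Ex !psi_basisM (nilp_lineE nc Ex) addrA addmx_pchar2 add0r.
by rewrite /commuteD (val_nilp d) (val_nilp e) commute_unipotent => /eqP->; rewrite psi0 subrr.
Qed.

Lemma psi_mul a b : psi a *m psi b =
  \sum_(d : D) \sum_(e : D) (f2F (a d) * f2F (b e)) *: (nilp d *m nilp e).
Proof.
rewrite /psi mulmx_suml; apply: eq_bigr => d _.
rewrite -scalemxAl mulmx_sumr scaler_sumr; apply: eq_bigr => e _.
by rewrite -scalemxAr scalerA.
Qed.

Lemma psi_prodA a b : psi (prodA a b) = lie (psi a) (psi b).
Proof.
rewrite /lie !psi_mul
  (exchange_big _ _ _ _ _ (fun e d => (f2F (b e) * f2F (a d)) *: (nilp e *m nilp d))) -sumrB.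
rewrite /prodA psi_sum; apply: eq_bigr => d _; rewrite psi_sum -sumrB; apply: eq_bigr => e _.
have -> : psi (if a d * b e == 0 then 0 else prodBasis d e) =
    f2F (a d * b e) *: psi (prodBasis d e).
  by case: (F2_cases (a d * b e)) => ->; rewrite ?eqxx ?psi0 ?f2F0 ?scale0r // f2F1 scale1r.
by rewrite psi_prodBasis f2FM /lie scalerBr (mulrC (f2F (b e))).
Qed.

Lemma mxtrace_nilp (d e : D) : \tr (nilp d *m nilp e) = (~~ commuteD d e : nat)%:R.
Proof.
have [u [u0 hu du]] := nilp_outer d; have [w [_ _ ew]] := nilp_outer e.
rewrite (commuteD_herm du ew u0 hu) du ew outer_mul mxtraceZ mxtrace_mulC trace_mx11.
by rewrite -/(herm w u) (hermC u w) mulf_conjF.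
Qed.

Lemma formA_trace a b : f2F (formA a b) = \tr (psi a *m psi b).
Proof.
rewrite /formA psi_mul f2F_sum raddf_sum; apply: eq_bigr => d _.
rewrite f2F_sum raddf_sum; apply: eq_bigr => e _.
by rewrite !f2FM /= mxtraceZ mxtrace_nilp; case: (~~ _).
Qed.

Lemma in_g2_psi a : in_g2 (psi a).
Proof.
apply: in_g2_sum => d _; have [v [_ hv ->]] := nilp_outer d.
by case: (F2_cases (a d)) => ->; rewrite ?scale0r ?scale1r; [exact: g2_zero | exact: in_g2_outer].
Qed.

Lemma radV_center a : radV a -> in_center (psi a).
Proof.
move=> rad; split=> [|y _]; first exact: in_g2_psi.
suff -> : psi a = (psi a 0 0)%:M by rewrite /lie scalar_mxC subrr.
apply: trace_outer0_scalar => w w0 hw; have [d <-] := outer_nilp w0 hw.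
by rewrite -psi_basisM -formA_trace rad.
Qed.

Lemma center_radV a : in_center (psi a) -> radV a.
Proof.
move=> [_ central] b; apply/eqP; rewrite -f2F_eq0 formA_trace mulmx_sumr raddf_sum.
apply/eqP/big1 => e _; rewrite /= -scalemxAr mxtraceZ.
have [w [w0 hw ew]] := nilp_outer e.
have cw : psi a *m outer w = outer w *m psi a.
  by apply/eqP; rewrite -subr_eq0 -ew; apply/eqP/central; rewrite ew; exact: in_g2_outer.
have ww : ctmx w *m w = 0 by apply/matrixP => i j; rewrite !ord1 [RHS]mxE; exact: hw.
(* From N X = X N with N = w w^*: w (w^* X w) = X w (w^* w) = 0. *)
have : w *m (ctmx w *m psi a *m w) = 0.
  by rewrite !mulmxA -/(outer w) -cw /outer -!mulmxA ww !mulmx0.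
rewrite mulmx11 => /eqP; rewrite scalemx_eq0 (negPf w0) orbF => /eqP q0.
by rewrite ew mxtrace_mul_outer q0 mulr0.
Qed.

Lemma psi_onto_mod_center x : in_g2 x -> exists a, in_center (x - psi a).
Proof.
elim=> [i j w ij w0 | | {}x y _ [a xa] _ [b yb] | {}x y gx [a xa] gy [b yb]].
- have [v [v0 hv vw]] := g2gen_outer ij w0; have [d dv] := outer_nilp v0 hv.
  by exists (basisM (val d)); rewrite psi_basisM dv vw subrr; exact: in_center0.
- by exists 0; rewrite psi0 subrr; exact: in_center0.
- by exists (a + b); rewrite psiD opprD addrACA; exact: in_centerD.
- exists (prodA a b); rewrite psi_prodA.
  have -> : lie x y = lie (psi a) y by rewrite -{1}(subrK (psi a) x) lieDl xa.2 // add0r.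
  have -> : lie (psi a) y = lie (psi a) (psi b).
    by rewrite -{1}(subrK (psi b) y) lieDr (lieC _ (y - _)) (yb.2 _ (in_g2_psi a)) add0r.
  by rewrite subrr; exact: in_center0.
Qed.

End Unitary.

End F4.

Theorem lemma5p2 (F : finFieldType) (n : nat) (hF : #|F| = 4%N) (hn : (2 <= n)%N) :
  exists psi : Aalg F n -> 'M[F]_(n.+1),
    (forall a b, psi (a + b) = psi a + psi b) /\
    (forall a, in_g2 (psi a)) /\
    (forall a b, in_center (psi (prodA a b) - lie (psi a) (psi b))) /\
    (forall a, in_center (psi a) <-> radV a) /\
    (forall x, in_g2 x -> exists a, in_center (x - psi a)).
Proof.
exists (@psi F n); split; first exact: (psiD hF).
split; first exact: (in_g2_psi hF).
split; first by move=> a b; rewrite (psi_prodA hF) subrr; exact: in_center0.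
split; first by move=> a; split; [exact: (center_radV hF) | exact: (radV_center hF)].
exact: (psi_onto_mod_center hF).
Qed.
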